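(* Assume $c_i=c>0$, $\gamma_i=\gamma>0$, $\nu_i=\nu>0$, $\rho_i=\rho\in(-1,1)$ for all $i$. Then the unique maximiser $(z^{Q,\star},z^{S,\star})$ of $f$ is symmetric: there are reals $z^\star_{s,n},z^\star_{d,n}$ and (for $n\ge2$) $z^\star_{o,n}$ with $z^{S,i,\star}=z^\star_{s,n}$, $z^{Q,i,i,\star}=z^\star_{d,n}$, $z^{Q,i,j,\star}=z^\star_{o,n}$ for $j\ne i$, and $\Delta_n(\gamma_{\rm P})>0$ and $$z^\star_{s,n}=-\frac{\rho\gamma}{Ac\sigma\nu\sqrt n\,\Delta_n(\gamma_{\rm P})}\Big(1-\frac{\gamma_{\rm P}}{n\widetilde\kappa_n}\Big),$$ $$z^\star_{o,n}=\frac1\nu\big(\alpha_nK_n^\star-\beta_nz^\star_{s,n}\big)\ (n\ge2),\qquad z^\star_{d,n}=\frac{1}{\nu A}\Big(\frac{\gamma_{\rm P}}{n}K_n^\star-\gamma\beta_nz^\star_{s,n}+\frac{1}{c\nu}\Big),$$ where $K_n^\star=\frac1{\kappa_n}\Big(\frac{\gamma\nu}{A}-\beta_n\delta z^\star_{s,n}\Big)$.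
   Context: Fix an integer $n\ge1$ and parameters $\sigma>0$, $\gamma_{\rm P}>0$, and for each $i\in\{1,\dots,n\}$: $c_i>0$, $\gamma_i>0$, $\nu_i>0$, $\rho_i\in(-1,1)$. Write $\nu=(\nu_1,\dots,\nu_n)^\top$, $\rho=(\rho_1,\dots,\rho_n)^\top$. The variables are a matrix $z^Q=(z^{Q,i,j})_{i,j}\in\mathbb{R}^{n\times n}$ ($i$ row, $j$ column) and a vector $z^S=(z^{S,1},\dots,z^{S,n})^\top\in\mathbb{R}^n$. Define $f:\mathbb{R}^{n\times n}\times\mathbb{R}^n\to\mathbb{R}$ by $$f(z^Q,z^S)=-\frac1n\sum_{i=1}^n\Big(\frac{(z^{Q,i,i})^2}{2c_i}+\frac{\gamma_i}{2}\sum_{j=1}^n\nu_j^2(z^{Q,i,j})^2+\frac{\gamma_i\sigma^2}{2}(z^{S,i})^2+\frac{\gamma_i\sigma}{\sqrt n}z^{S,i}\sum_{j=1}^n\rho_j\nu_jz^{Q,i,j}-\frac{z^{Q,i,i}}{c_i}\Big)-\frac{\gamma_{\rm P}}{2n^2}\sum_{i=1}^n\Big(\Big(\nu_i-\nu_i\sum_{j=1}^nz^{Q,j,i}-\frac{\rho_i\sigma}{\sqrt n}\sum_{j=1}^nz^{S,j}\Big)^2+\frac{(1-\rho_i^2)\sigma^2}{n}\Big(\sum_{j=1}^nz^{S,j}\Big)^2\Big).$$ $f$ has a unique global maximiser $(z^{Q,\star},z^{S,\star})$. In the homogeneous case define $A=\gamma+\frac{1}{c\nu^2}$, $\delta=1-\frac{\gamma}{A}=\frac{1}{Ac\nu^2}$,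 $\alpha_n=\frac{\gamma_{\rm P}}{n\gamma}$, $\beta_n=\frac{\sigma\rho}{\sqrt n}$, $\widetilde\kappa_n=A+\frac{\gamma_{\rm P}}{n}\Big(\frac{(n-1)A}{\gamma}+1\Big)$, $\kappa_n=\widetilde\kappa_n/A$, and $$\Delta_n(\gamma_{\rm P})=(\gamma+\gamma_{\rm P})(1-\rho^2)+\frac{\gamma\rho^2\delta}{n}+\frac{\gamma_{\rm P}\rho^2\delta^2}{n^2\kappa_n}.$$ *)

From HB Require Import structures.
From mathcomp Require Import all_boot all_order all_algebra.
From mathcomp Require Import reals.
Set Implicit Arguments. Unset Strict Implicit. Unset Printing Implicit Defensive.
Import Order.TTheory GRing.Theory Num.Theory.
Local Open Scope ring_scope.

Section Defs.
Variable R : realType.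

(* The objective f of the paper, with general (heterogeneous) parameters
   c, gam, nu, rho : 'I_n -> R.  zQ i j = z^{Q,i,j} (row i, column j),
   zS i 0 = z^{S,i}. *)
Definition fobj (n : nat) (sigma gP : R) (c gam nu rho : 'I_n -> R)
    (zQ : 'M[R]_n) (zS : 'cV[R]_n) : R :=
  - (n%:R)^-1 * \sum_(i < n)
      ( (zQ i i)^+2 / (2 * c i)
      + gam i / 2 * \sum_(j < n) (nu j)^+2 * (zQ i j)^+2
      + gam i * sigma^+2 / 2 * (zS i 0)^+2
      + gam i * sigma / Num.sqrt (n%:R) * zS i 0 *
          \sum_(j < n) rho j * nu j * zQ i j
      - zQ i i / c i )
  - gP / (2 * (n%:R)^+2) * \sum_(i < n)
      ( (nu i - nu i * (\sum_(j < n) zQ j i)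
               - rho i * sigma / Num.sqrt (n%:R) * \sum_(j < n) zS j 0)^+2
      + (1 - (rho i)^+2) * sigma^+2 / n%:R * (\sum_(j < n) zS j 0)^+2 ).

Definition is_global_max (n : nat) (g : 'M[R]_n -> 'cV[R]_n -> R)
    (zQ : 'M[R]_n) (zS : 'cV[R]_n) : Prop :=
  forall (wQ : 'M[R]_n) (wS : 'cV[R]_n), g wQ wS <= g zQ zS.

Definition hA (c gam nu : R) : R := gam + (c * nu^+2)^-1.
Definition hdelta (c gam nu : R) : R := 1 - gam / hA c gam nu.
Definition halpha (n : nat) (gam gP : R) : R := gP / (n%:R * gam).
Definition hbeta (n : nat) (sigma rho : R) : R := sigma * rho / Num.sqrt (n%:R).
Definition hkappat (n : nat) (c gam nu gP : R) : R :=
  hA c gam nu + gP / n%:R * ((n%:R - 1) * hA c gam nu / gam + 1).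
Definition hkappa (n : nat) (c gam nu gP : R) : R :=
  hkappat n c gam nu gP / hA c gam nu.
Definition hDelta (n : nat) (c gam nu rho gP : R) : R :=
  (gam + gP) * (1 - rho^+2) + gam * rho^+2 * hdelta c gam nu / n%:R
  + gP * rho^+2 * (hdelta c gam nu)^+2 / ((n%:R)^+2 * hkappa n c gam nu gP).

Definition zs_star (n : nat) (sigma c gam nu rho gP : R) : R :=
  - (rho * gam) / (hA c gam nu * c * sigma * nu * Num.sqrt (n%:R)
                   * hDelta n c gam nu rho gP)
  * (1 - gP / (n%:R * hkappat n c gam nu gP)).
Definition K_star (n : nat) (sigma c gam nu rho gP : R) : R :=
  (hkappa n c gam nu gP)^-1 *
  (gam * nu / hA c gam nu
   - hbeta n sigma rho * hdelta c gam nu * zs_star n sigma c gam nu rho gP).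
Definition zo_star (n : nat) (sigma c gam nu rho gP : R) : R :=
  nu^-1 * (halpha n gam gP * K_star n sigma c gam nu rho gP
           - hbeta n sigma rho * zs_star n sigma c gam nu rho gP).
Definition zd_star (n : nat) (sigma c gam nu rho gP : R) : R :=
  (nu * hA c gam nu)^-1 *
  (gP / n%:R * K_star n sigma c gam nu rho gP
   - gam * hbeta n sigma rho * zs_star n sigma c gam nu rho gP
   + (c * nu)^-1).
End Defs.

From HB Require Import structures.
From mathcomp Require Import all_boot all_order all_algebra.
From mathcomp Require Import reals ring lra.
Set Implicit Arguments. Unset Strict Implicit. Unset Printing Implicit Defensive.
Import Order.TTheory GRing.Theory Num.Theory.
Local Open Scope ring_scope.

(* f is a concave quadratic. Around the symmetric point (diag_off_mx zd zo,
   const_mx zs) it splits as its value there, a term linear in the deviation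
   (H, K) that only sees tr H, the total of H and the total of K, and minus a
   sum of squares [fdefect H K]; each square is a binary form
   (nu x + beta y)^2 + e y^2 with e = (1 - rho^2) sigma^2 / n > 0, so the
   defect vanishes only at H = K = 0.  The three linear coefficients vanish
   at the closed forms: K_n^* is nu (1 - column sum) - n beta z_s, the
   diagonal and off-diagonal equations express z_d and z_o through K_n^* and
   z_s, and the equation in S is solved by z_s, with denominator Delta_n. *)

Lemma is_global_max_centered (R : realType) n
    (g q : 'M[R]_n -> 'cV[R]_n -> R) (C : R) zQ zS :
  (forall wQ wS, g wQ wS = C - q (wQ - zQ) (wS - zS)) ->
  q 0 0 = 0 -> (forall hQ hS, 0 <= q hQ hS) ->
  (forall hQ hS, q hQ hS = 0 -> hQ = 0 /\ hS = 0) ->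
  forall wQ wS, is_global_max g wQ wS <-> wQ = zQ /\ wS = zS.
Proof.
move=> gE q00 q_ge0 q_eq0 wQ wS; split=> [wmax | [-> ->] vQ vS].
  have q_le0 := wmax zQ zS; rewrite !gE !subrr q00 in q_le0.
  have /q_eq0[/subr0_eq -> /subr0_eq ->] // : q (wQ - zQ) (wS - zS) = 0.
  by apply/eqP; rewrite eq_le q_ge0 andbT; lra.
by rewrite !gE !subrr q00 lerD2l lerN2 q_ge0.
Qed.

Lemma sumr_const_ord (R : pzSemiRingType) n (x : R) : \sum_(i < n) x = n%:R * x.
Proof. by rewrite sumr_const card_ord mulr_natl. Qed.

HB.lock Definition sqform {R : pzRingType} (a b e x y : R) :=
  (a * x + b * y) ^+ 2 + e * y ^+ 2.

Lemma sqformD (R : comPzRingType) (a b e x y h k : R) :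
  sqform a b e (x + h) (y + k)
  = sqform a b e x y + 2 * ((a * x + b * y) * (a * h + b * k) + e * y * k)
    + sqform a b e h k.
Proof. by rewrite sqform.unlock; ring. Qed.

Lemma sqform00 (R : comPzRingType) (a b e : R) : sqform a b e 0 0 = 0.
Proof. by rewrite sqform.unlock; ring. Qed.

Section SquareForm.
Variable R : realDomainType.
Implicit Types a b e x y : R.

Lemma sqform_ge0 a b e x y : 0 <= e -> 0 <= sqform a b e x y.
Proof.
by move=> e_ge0; rewrite sqform.unlock addr_ge0 ?sqr_ge0 // mulr_ge0 ?sqr_ge0.
Qed.

Lemma sqform_eq0 a b e x y :
  a != 0 -> 0 < e -> sqform a b e x y = 0 -> x = 0 /\ y = 0.
Proof.
move=> a_neq0 e_gt0 /eqP; rewrite sqform.unlock.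
rewrite (paddr_eq0 (sqr_ge0 _) (mulr_ge0 (ltW e_gt0) (sqr_ge0 y))).
rewrite sqrf_eq0 mulf_eq0 sqrf_eq0 (gt_eqF e_gt0) /= => /andP[+ /eqP y0].
by rewrite y0 mulr0 addr0 mulf_eq0 (negbTE a_neq0) => /eqP.
Qed.

End SquareForm.

Definition diag_off_mx {T : Type} {n} (d o : T) : 'M[T]_n :=
  \matrix_(i, j) if i == j then d else o.

Lemma diag_off_mxC (T : Type) n (d o : T) (i j : 'I_n) :
  diag_off_mx d o i j = diag_off_mx d o j i.
Proof. by rewrite !mxE eq_sym. Qed.

Lemma sum_diag_off_mxM (R : comPzRingType) n (d o : R) (x : 'I_n -> R) i :
  \sum_j diag_off_mx d o i j * x j = o * \sum_j x j + (d - o) * x i.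
Proof.
rewrite (bigD1 i) // [\sum_j x j](bigD1 i) //= mxE eqxx.
rewrite (eq_bigr (fun j => o * x j)) -?mulr_sumr; first by ring.
by move=> j ji; rewrite mxE eq_sym (negbTE ji).
Qed.

Lemma sum_diag_off_mx (R : comPzRingType) n (d o : R) (i : 'I_n) :
  \sum_j diag_off_mx d o i j = d + (n%:R - 1) * o.
Proof.
have := sum_diag_off_mxM d o (fun _ => 1) i.
rewrite sumr_const_ord (eq_bigr _ (fun j _ => mulr1 _)) => ->; ring.
Qed.

Lemma diag_off_mxP (T : Type) n (d o : T) (M : 'M[T]_n) :
  M = diag_off_mx d o <-> (forall i, M i i = d) /\ (forall i j, i != j -> M i j = o).
Proof.
split=> [-> | [Md Mo]].
  by split=> [i | i j /negbTE ij]; rewrite mxE ?eqxx ?ij.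
apply/matrixP => i j; rewrite mxE.
by case: eqP => [<- | /eqP]; [exact: Md | exact: Mo].
Qed.

Lemma const_colP (T : Type) n (s : T) (S : 'cV[T]_n) :
  S = const_mx s <-> forall i, S i 0 = s.
Proof.
split=> [-> i | S_s]; first by rewrite mxE.
by apply/matrixP => i j; rewrite mxE (ord1 j).
Qed.

Section Homogeneous.
Variables (R : realType) (n : nat) (sigma gP c gam nu rho : R).
Hypotheses (n_gt0 : (0 < n)%N) (sigma_gt0 : 0 < sigma) (gP_gt0 : 0 < gP)
  (c_gt0 : 0 < c) (gam_gt0 : 0 < gam) (nu_gt0 : 0 < nu)
  (rho_gtN1 : -1 < rho) (rho_lt1 : rho < 1).

Local Notation N := (n%:R : R).
Local Notation f :=
  (@fobj R n sigma gP (fun _ => c) (fun _ => gam) (fun _ => nu) (fun _ => rho)).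
Local Notation beta := (hbeta n sigma rho).
Local Notation e := ((1 - rho ^+ 2) * sigma ^+ 2 / N).
Local Notation P := (sqform nu beta e).

Lemma N_gt0 : 0 < N. Proof. by rewrite ltr0n. Qed.
Lemma sqrtN_gt0 : 0 < Num.sqrt N. Proof. by rewrite sqrtr_gt0 N_gt0. Qed.
Lemma sqr_sqrtN : Num.sqrt N ^+ 2 = N. Proof. by rewrite sqr_sqrtr // ler0n. Qed.

(* [field] cannot use [Num.sqrt N ^+ 2 = N]: generalize [Num.sqrt N] to [r]
   and rewrite [N] as [r ^+ 2]. *)
Local Ltac sqrtN_as_root := have := sqrtN_gt0; have := sqr_sqrtN;
  move: (Num.sqrt N); let rE := fresh "rE" in intros r rE r_gt0; rewrite -?rE.

Lemma one_sub_rho2_gt0 : 0 < 1 - rho ^+ 2.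
Proof. by have := rho_gtN1; have := rho_lt1; nra. Qed.

Lemma e_gt0 : 0 < e.
Proof. by rewrite divr_gt0 ?N_gt0 // mulr_gt0 ?exprn_gt0 ?one_sub_rho2_gt0. Qed.

Lemma sum_sqform (x : 'I_n -> R) y :
  \sum_j P (x j) y
  = nu ^+ 2 * \sum_j x j ^+ 2 + 2 * nu * beta * y * \sum_j x j
    + sigma ^+ 2 * y ^+ 2.
Proof.
rewrite (eq_bigr (fun j => nu ^+ 2 * x j ^+ 2 + 2 * nu * beta * y * x j
                          + (beta ^+ 2 + e) * y ^+ 2)); last first.
  by move=> j _; rewrite sqform.unlock; ring.
rewrite !big_split /= sumr_const_ord -!mulr_sumr /hbeta.
by sqrtN_as_root; field; rewrite gt_eqF.
Qed.

Lemma fobjE (Q : 'M[R]_n) (S : 'cV[R]_n) :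
  f Q S = - N^-1 * \sum_i (Q i i ^+ 2 / (2 * c) - Q i i / c
                            + gam / 2 * \sum_j P (Q i j) (S i 0))
          - gP / (2 * N ^+ 2) * \sum_i P (\sum_j Q j i - 1) (\sum_j S j 0).
Proof.
rewrite /fobj; congr (_ * _ - _ * _); apply: eq_bigr => i _.
  rewrite sum_sqform -mulr_sumr -[\sum_j rho * nu * _]mulr_sumr /hbeta.
  by sqrtN_as_root; field; rewrite !gt_eqF.
by rewrite sqform.unlock /hbeta; ring.
Qed.

Definition linesum d o := d + (N - 1) * o.
Definition Kval d o s := nu * (1 - linesum d o) - N * beta * s.

Definition grad_diag d o := (d - 1) / c + gam * nu ^+ 2 * (d - o).
Definition grad_Q d o s := gam * nu * (nu * o + beta * s) - gP / N * nu * Kval d o s.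
Definition grad_S d o s :=
  gam * (beta * (nu * linesum d o + N * beta * s) + N * e * s)
  - gP * (beta * Kval d o s - N * e * s).

Definition fdefect (H : 'M[R]_n) (K : 'cV[R]_n) :=
  N^-1 * \sum_i (H i i ^+ 2 / (2 * c) + gam / 2 * \sum_j P (H i j) (K i 0))
  + gP / (2 * N ^+ 2) * \sum_i P (\sum_j H j i) (\sum_j K j 0).

Lemma sum_sqformD (z h : 'I_n -> R) y k :
  \sum_j P (z j + h j) (y + k)
  = \sum_j P (z j) y
    + 2 * (nu ^+ 2 * \sum_j z j * h j + nu * beta * y * \sum_j h j
           + beta * nu * k * \sum_j z j + N * (beta ^+ 2 + e) * y * k)
    + \sum_j P (h j) k.
Proof.
pose a := 2 * nu ^+ 2; pose b := 2 * nu * beta * y; pose b' := 2 * beta * nu * k.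
pose a0 := 2 * (beta ^+ 2 + e) * y * k.
have lin : \sum_j (a * (z j * h j) + b * h j + b' * z j + a0)
           = a * \sum_j z j * h j + b * \sum_j h j + b' * \sum_j z j + N * a0.
  by rewrite !big_split sumr_const_ord -!mulr_sumr.
rewrite (eq_bigr (fun j => P (z j) y + (a * (z j * h j) + b * h j + b' * z j + a0)
                          + P (h j) k)); last first.
  by move=> j _; rewrite sqformD /a /b /b' /a0; ring.
by rewrite big_split big_split /= lin /a /b /b' /a0; ring.
Qed.

Lemma row_shift d o s (H : 'M[R]_n) (K : 'cV[R]_n) i :
  let Q := diag_off_mx d o + H in let S := const_mx s + K in
  Q i i ^+ 2 / (2 * c) - Q i i / c + gam / 2 * \sum_j P (Q i j) (S i 0)
  = d ^+ 2 / (2 * c) - d / c + gam / 2 * \sum_j P (diag_off_mx d o i j) s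
    + (grad_diag d o * H i i + gam * nu * (nu * o + beta * s) * \sum_j H i j
       + gam * (beta * (nu * linesum d o + N * beta * s) + N * e * s) * K i 0)
    + (H i i ^+ 2 / (2 * c) + gam / 2 * \sum_j P (H i j) (K i 0)).
Proof.
have QE j : (diag_off_mx d o + H) i j = diag_off_mx d o i j + H i j by rewrite mxE.
have SE : (const_mx s + K) i 0 = s + K i 0 by rewrite !mxE.
move=> Q S; rewrite /Q /S QE SE; under eq_bigr do rewrite QE.
rewrite sum_sqformD sum_diag_off_mxM sum_diag_off_mx [diag_off_mx d o i i]mxE eqxx.
by rewrite /grad_diag /linesum; field; rewrite !gt_eqF ?N_gt0.
Qed.

Lemma col_shift d o s (H : 'M[R]_n) (K : 'cV[R]_n) i :
  P (\sum_j (diag_off_mx d o + H) j i - 1) (\sum_j (const_mx s + K) j 0)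
  = P (linesum d o - 1) (N * s)
    - 2 * (Kval d o s * (nu * \sum_j H j i + beta * \sum_j K j 0)
           - N * e * s * \sum_j K j 0)
    + P (\sum_j H j i) (\sum_j K j 0).
Proof.
have -> : \sum_j (diag_off_mx d o + H) j i - 1 = linesum d o - 1 + \sum_j H j i.
  rewrite (eq_bigr (fun j => diag_off_mx d o i j + H j i)); last first.
    by move=> j _; rewrite mxE diag_off_mxC.
  by rewrite big_split /= sum_diag_off_mx /linesum; ring.
have -> : \sum_j (const_mx s + K) j 0 = N * s + \sum_j K j 0.
  by rewrite -sumr_const_ord -big_split; apply: eq_bigr => j _; rewrite !mxE.
by rewrite sqformD /Kval; ring.
Qed.

Lemma fobj_sym d o s :
  f (diag_off_mx d o) (const_mx s)
  = - N^-1 * \sum_(i < n) (d ^+ 2 / (2 * c) - d / c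
                           + gam / 2 * \sum_(j < n) P (diag_off_mx d o i j) s)
    - gP / (2 * N) * P (linesum d o - 1) (N * s).
Proof.
have colZ (i : 'I_n) : \sum_j diag_off_mx d o j i = linesum d o.
  by under eq_bigr do rewrite diag_off_mxC; exact: sum_diag_off_mx.
have sumS : \sum_j (const_mx s : 'cV[R]_n) j 0 = N * s.
  by under eq_bigr do rewrite mxE; exact: sumr_const_ord.
rewrite fobjE; under [X in _ - _ * X]eq_bigr do rewrite colZ sumS.
rewrite sumr_const_ord; under eq_bigr do rewrite [diag_off_mx _ _ _ _]mxE eqxx.
under eq_bigr do under eq_bigr do rewrite [const_mx _ _ _]mxE.
by field; rewrite gt_eqF ?N_gt0.
Qed.

Lemma fobj_shift d o s (H : 'M[R]_n) (K : 'cV[R]_n) :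
  f (diag_off_mx d o + H) (const_mx s + K)
  = f (diag_off_mx d o) (const_mx s)
    - N^-1 * (grad_diag d o * \sum_i H i i + grad_Q d o s * \sum_i \sum_j H i j
              + grad_S d o s * \sum_i K i 0)
    - fdefect H K.
Proof.
have colLin : \sum_i (Kval d o s * (nu * \sum_j H j i + beta * \sum_j K j 0)
                      - N * e * s * \sum_j K j 0)
  = Kval d o s * nu * \sum_i \sum_j H i j
    + N * (Kval d o s * beta - N * e * s) * \sum_j K j 0.
  rewrite big_split sumrN -mulr_sumr big_split !sumr_const_ord -mulr_sumr /=.
  by rewrite [in RHS]exchange_big /=; ring.
rewrite fobjE fobj_sym; under eq_bigr do rewrite row_shift.
under [X in _ - _ * X = _]eq_bigr do rewrite col_shift.
rewrite /fdefect /grad_Q /grad_S !(big_split, sumrN, sumr_const_ord) /=.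
rewrite -!mulr_sumr colLin.
by field; rewrite !gt_eqF ?N_gt0.
Qed.

Lemma fdefect_diag_ge0 x : 0 <= x ^+ 2 / (2 * c).
Proof. by rewrite divr_ge0 ?sqr_ge0 // mulr_ge0 // ltW. Qed.

Lemma fdefect_rowsum_ge0 (x : 'I_n -> R) y : 0 <= gam / 2 * \sum_j P (x j) y.
Proof.
apply: mulr_ge0; first by rewrite divr_ge0 // ltW.
by apply: sumr_ge0 => j _; exact/sqform_ge0/ltW/e_gt0.
Qed.

Lemma fdefect_row_ge0 (H : 'M[R]_n) (K : 'cV[R]_n) i :
  0 <= H i i ^+ 2 / (2 * c) + gam / 2 * \sum_j P (H i j) (K i 0).
Proof. exact: addr_ge0 (fdefect_diag_ge0 _) (fdefect_rowsum_ge0 _ _). Qed.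

Lemma fdefect_rows_ge0 (H : 'M[R]_n) (K : 'cV[R]_n) :
  0 <= N^-1 * \sum_i (H i i ^+ 2 / (2 * c) + gam / 2 * \sum_j P (H i j) (K i 0)).
Proof.
apply: mulr_ge0; first by rewrite invr_ge0 ltW ?N_gt0.
by apply: sumr_ge0 => i _; exact: fdefect_row_ge0.
Qed.

Lemma fdefect_cols_ge0 (H : 'M[R]_n) (K : 'cV[R]_n) :
  0 <= gP / (2 * N ^+ 2) * \sum_i P (\sum_j H j i) (\sum_j K j 0).
Proof.
apply: mulr_ge0; first by rewrite divr_ge0 ?ltW // mulr_gt0 ?exprn_gt0 ?N_gt0.
by apply: sumr_ge0 => i _; exact/sqform_ge0/ltW/e_gt0.
Qed.

Lemma fdefect_ge0 H K : 0 <= fdefect H K.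
Proof. exact: addr_ge0 (fdefect_rows_ge0 H K) (fdefect_cols_ge0 H K). Qed.

Lemma fdefect_eq0 H K : fdefect H K = 0 -> H = 0 /\ K = 0.
Proof.
move=> /eqP; rewrite /fdefect paddr_eq0 ?fdefect_rows_ge0 ?fdefect_cols_ge0 //.
move=> /andP[+ _].
rewrite mulf_eq0 invr_eq0 gt_eqF ?N_gt0 //= => /eqP rows0.
have HK0 i j : H i j = 0 /\ K i 0 = 0.
  have /(_ i isT)/eqP := psumr_eq0P (fun k _ => fdefect_row_ge0 H K k) rows0.
  rewrite paddr_eq0 ?fdefect_diag_ge0 ?fdefect_rowsum_ge0 // => /andP[_].
  rewrite mulf_eq0 gt_eqF ?divr_gt0 //= => /eqP /psumr_eq0P Prow.
  apply: (sqform_eq0 (lt0r_neq0 nu_gt0) e_gt0); apply: Prow => // k _.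
  exact/sqform_ge0/ltW/e_gt0.
split; apply/matrixP => i j; rewrite mxE; first by case: (HK0 i j).
by rewrite (ord1 j); case: (HK0 i i).
Qed.

Lemma fdefect00 : fdefect 0 0 = 0.
Proof.
have Z0 i j : (0 : 'M[R]_n) i j = 0 by rewrite mxE.
have K0 i : (0 : 'cV[R]_n) i 0 = 0 by rewrite mxE.
have row0 i : \sum_j P ((0 : 'M[R]_n) i j) ((0 : 'cV[R]_n) i 0) = 0.
  by rewrite big1 // => j _; rewrite Z0 K0 sqform00.
have col0 (i : 'I_n) :
    P (\sum_j (0 : 'M[R]_n) j i) (\sum_j (0 : 'cV[R]_n) j 0) = 0.
  by rewrite !big1 ?sqform00 // => j _; rewrite ?Z0 ?K0.
rewrite /fdefect big1 => [|i _]; last by rewrite row0 Z0 expr0n mul0r mulr0 addr0.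
by rewrite big1 ?mulr0 ?addr0 // => i _; exact: col0.
Qed.

Local Notation A := (hA c gam nu).
Local Notation zs := (zs_star n sigma c gam nu rho gP).
Local Notation zd := (zd_star n sigma c gam nu rho gP).
Local Notation zo := (zo_star n sigma c gam nu rho gP).
Local Notation Ks := (K_star n sigma c gam nu rho gP).

Lemma hA_gt0 : 0 < A.
Proof. by rewrite /hA addr_gt0 // invr_gt0 mulr_gt0 // exprn_gt0. Qed.

Lemma invc_hA : c^-1 = nu ^+ 2 * (A - gam).
Proof. by rewrite /hA; field; rewrite !gt_eqF. Qed.

Lemma hdeltaE : hdelta c gam nu = (A * c * nu ^+ 2)^-1.
Proof. by rewrite /hdelta !invfM invc_hA; field; rewrite !gt_eqF ?hA_gt0. Qed.

Lemma hdelta_gt0 : 0 < hdelta c gam nu.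
Proof. by rewrite hdeltaE invr_gt0 !mulr_gt0 ?exprn_gt0 ?hA_gt0. Qed.

(* [N * gam * hkappat] with its denominators cleared, the form in which
   [field] asks for it. *)
Lemma kappat_numer_gt0 : 0 < A * (N * gam) + gP * ((N - 1) * A + gam).
Proof.
have N_ge1 : 1 <= N by rewrite ler1n.
apply: addr_gt0; first by rewrite !mulr_gt0 ?hA_gt0 ?N_gt0.
by rewrite mulr_gt0 // ltr_wpDl // mulr_ge0 ?subr_ge0 // ltW ?hA_gt0.
Qed.

Lemma hkappatE : hkappat n c gam nu gP
  = (A * (N * gam) + gP * ((N - 1) * A + gam)) / (N * gam).
Proof. by rewrite /hkappat; field; rewrite !gt_eqF ?N_gt0. Qed.

Lemma hkappat_gt0 : 0 < hkappat n c gam nu gP.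
Proof. by rewrite hkappatE divr_gt0 ?kappat_numer_gt0 ?mulr_gt0 ?N_gt0. Qed.

Lemma hkappa_gt0 : 0 < hkappa n c gam nu gP.
Proof. by rewrite /hkappa divr_gt0 ?hkappat_gt0 ?hA_gt0. Qed.

Lemma hDelta_gt0 : 0 < hDelta n c gam nu rho gP.
Proof.
have t1 : 0 < (gam + gP) * (1 - rho ^+ 2).
  exact: mulr_gt0 (addr_gt0 gam_gt0 gP_gt0) one_sub_rho2_gt0.
have t2 : 0 <= gam * rho ^+ 2 * hdelta c gam nu / N.
  exact: divr_ge0 (mulr_ge0 (mulr_ge0 (ltW gam_gt0) (sqr_ge0 rho))
                            (ltW hdelta_gt0)) (ltW N_gt0).
have t3 :
    0 <= gP * rho ^+ 2 * hdelta c gam nu ^+ 2 / (N ^+ 2 * hkappa n c gam nu gP).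
  exact: divr_ge0 (mulr_ge0 (mulr_ge0 (ltW gP_gt0) (sqr_ge0 rho)) (sqr_ge0 _))
                  (mulr_ge0 (sqr_ge0 _) (ltW hkappa_gt0)).
by rewrite /hDelta; lra.
Qed.

Lemma Kval_starE :
  Kval zd zo zs = Ks - (hkappa n c gam nu gP * Ks
                        - (gam * nu / A - beta * hdelta c gam nu * zs)).
Proof.
rewrite /Kval /linesum /zd_star /zo_star /hkappa /hkappat /hdelta /halpha.
rewrite [(c * nu)^-1]invfM invc_hA.
by field; rewrite !gt_eqF ?hA_gt0 ?N_gt0.
Qed.

Lemma Kval_star : Kval zd zo zs = Ks.
Proof.
by rewrite Kval_starE /K_star mulVKf ?subrr ?subr0 // gt_eqF ?hkappa_gt0.
Qed.

Lemma zs_balance :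
  N * e * (gam + gP) * zs + beta * (gam * nu - (gam + gP) * Ks) = 0.
Proof.
have Delta_neq0 := lt0r_neq0 hDelta_gt0.
have Dzs : hDelta n c gam nu rho gP * zs
         = - (rho * gam * hdelta c gam nu * nu) / (sigma * Num.sqrt N)
           * (1 - gP / (N * hkappat n c gam nu gP)).
  rewrite /zs_star hdeltaE; field.
  by rewrite Delta_neq0 !gt_eqF ?hkappat_gt0 ?hA_gt0 ?sqrtN_gt0 ?N_gt0.
(* Multiplying by [hDelta] keeps it out of the denominators [field] must
   certify. *)
apply: (mulIf Delta_neq0); rewrite mul0r.
have -> : (N * e * (gam + gP) * zs + beta * (gam * nu - (gam + gP) * Ks))
          * hDelta n c gam nu rho gP
  = N * e * (gam + gP) * (hDelta n c gam nu rho gP * zs)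
    + beta * (gam * nu * hDelta n c gam nu rho gP
              - (gam + gP) * (hkappa n c gam nu gP)^-1
                * (gam * nu / A * hDelta n c gam nu rho gP
                   - beta * hdelta c gam nu * (hDelta n c gam nu rho gP * zs))).
  by rewrite /K_star; ring.
rewrite Dzs /hDelta /hkappa /hkappat /hdelta /hbeta.
have := kappat_numer_gt0; sqrtN_as_root => numer_gt0.
by field; rewrite !gt_eqF ?hA_gt0.
Qed.

Lemma grad_diag_star : grad_diag zd zo = 0.
Proof.
rewrite /grad_diag /zd_star /zo_star /halpha [(c * nu)^-1]invfM invc_hA.
by field; rewrite !gt_eqF ?hA_gt0 ?N_gt0.
Qed.

Lemma grad_Q_star : grad_Q zd zo zs = 0.
Proof.
rewrite /grad_Q Kval_star /zo_star /halpha.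
by field; rewrite !gt_eqF ?N_gt0.
Qed.

Lemma grad_S_star : grad_S zd zo zs = 0.
Proof.
rewrite /grad_S.
have -> : nu * linesum zd zo + N * beta * zs = nu - Ks.
  by rewrite -Kval_star /Kval; ring.
by rewrite Kval_star -[RHS]zs_balance; ring.
Qed.

Lemma fobj_star_shift (W : 'M[R]_n) (S : 'cV[R]_n) :
  f W S = f (diag_off_mx zd zo) (const_mx zs)
          - fdefect (W - diag_off_mx zd zo) (S - const_mx zs).
Proof.
rewrite -{1}[W](subrKC (diag_off_mx zd zo)) -{1}[S](subrKC (const_mx zs)).
rewrite fobj_shift grad_diag_star grad_Q_star grad_S_star.
by rewrite !mul0r !addr0 mulr0 subr0.
Qed.

Lemma is_global_max_fobjE (W : 'M[R]_n) (S : 'cV[R]_n) :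
  is_global_max f W S <-> W = diag_off_mx zd zo /\ S = const_mx zs.
Proof.
exact: is_global_max_centered fobj_star_shift fdefect00 fdefect_ge0 fdefect_eq0 W S.
Qed.

End Homogeneous.

Theorem mainTheorem2 (R : realType) (n : nat) (sigma gP c gam nu rho : R) :
  (0 < n)%N -> 0 < sigma -> 0 < gP -> 0 < c -> 0 < gam -> 0 < nu ->
  -1 < rho -> rho < 1 ->
  let f := fobj sigma gP (fun _ => c) (fun _ => gam) (fun _ => nu) (fun _ => rho) in
  let zs := zs_star n sigma c gam nu rho gP in
  let zd := zd_star n sigma c gam nu rho gP in
  let zo := zo_star n sigma c gam nu rho gP in
  0 < hDelta n c gam nu rho gP /\
  (forall (zQ : 'M[R]_n) (zS : 'cV[R]_n),
     is_global_max f zQ zS <->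
     ((forall i : 'I_n, zS i 0 = zs) /\
      (forall i : 'I_n, zQ i i = zd) /\
      (forall i j : 'I_n, i != j -> zQ i j = zo))).
Proof.
move=> n_gt0 sigma_gt0 gP_gt0 c_gt0 gam_gt0 nu_gt0 rho_gtN1 rho_lt1 f zs zd zo.
split=> [|zQ zS]; first exact: hDelta_gt0.
rewrite is_global_max_fobjE // diag_off_mxP const_colP.
by split=> [[[Qd Qo] Ss] | [Ss [Qd Qo]]].
Qed.
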